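(* The compact Riemannian nilmanifold $M=(\Gamma\backslash N,g)$ defined below has completely integrable geodesic flow.
   Context: Let $\mathfrak v$ be a 5-dimensional real inner product space with orthonormal basis $X_i,X_j,Y_i,Y_j,Y_k$ and $\mathfrak z$ a 3-dimensional real inner product space with orthonormal basis $Z_i,Z_j,Z_k$. On $\mathfrak n=\mathfrak v\oplus\mathfrak z$ (orthogonal sum) define a two-step nilpotent Lie bracket $[\,,]$ with $\mathfrak z$ central and $[\mathfrak v,\mathfrak v]\subseteq\mathfrak z$, whose only nonzero brackets of basis vectors (up to antisymmetry) are $[X_i,Y_j]=Z_k$, $[X_i,Y_k]=-Z_j$, $[X_j,Y_i]=-Z_k$, $[X_j,Y_k]=Z_i$. Let $N$ be the simply connected Lie group with Lie algebra $\mathfrak n$, $g$ the left invariant metric given by the inner product on $\mathfrak n$, and $\Gamma=\exp(\mathcal G)$ with $\mathcal G=\mathrm{span}_{\mathbb Z}\{X_i,X_j,Y_i,Y_j,Y_k,\tfrac12 Z_i,\tfrac12 Z_j,\tfrac12 Z_k\}$ (a discrete cocompact subgroup); $M=(\Gamma\backslash N,g)$ carries the induced metric. Completely integrable geodesic flow (Liouville) on an $n$-manifold means: there exist $n$ pairwise Poisson-commuting smooth first integrals of the geodesic flow on $T^*M$ with $df_1\wedge\dots\wedge df_n\neq0$ on an open dense set. *)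

From HB Require Import structures.
From mathcomp Require Import all_boot all_order all_algebra.
From mathcomp Require Import all_classical all_reals all_analysis.
Set Implicit Arguments. Unset Strict Implicit. Unset Printing Implicit Defensive.
Import Order.TTheory GRing.Theory Num.Theory.
Import numFieldNormedType.Exports.
Local Open Scope classical_set_scope.
Local Open Scope ring_scope.

Section Calc.
Variable R : realType.

Definition evec (n : nat) (i : 'I_n) : 'rV[R]_n := \row_(j < n) (i == j)%:R.

Definition pdiff (n : nat) (i : 'I_n) (f : 'rV[R]_n -> R) : 'rV[R]_n -> R :=
  fun x => 'D_(evec i) f x.

Definition iter_pdiff (n : nat) (s : seq 'I_n) (f : 'rV[R]_n -> R) :=
  foldr (@pdiff n) f s.

Definition smooth (n : nat) (f : 'rV[R]_n -> R) : Prop :=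
  forall s : seq 'I_n,
    continuous (iter_pdiff s f) /\
    forall (x : 'rV[R]_n) (i : 'I_n), derivable (iter_pdiff s f) x (evec i).

(* Coordinates on T^*N = N x n^*  ~=  R^8 x R^8 = R^16.                     *)
(* N is identified with n = v (+) z via exp (exponential coordinates);      *)
(* a point of T^*N is (x, z, xi, eta) with                                  *)
(*   x  = coords 0..4   (w.r.t. X_i, X_j, Y_i, Y_j, Y_k),                   *)
(*   z  = coords 5..7   (w.r.t. Z_i, Z_j, Z_k),                             *)
(*   xi = coords 8..12, eta = coords 13..15  (the canonical momenta         *)
(*   conjugate to x and z).                                                 *)
Definition cT := 'rV[R]_16.

Definition cc (X : cT) (k : nat) : R := X ord0 (inord k).
Definition xv  (X : cT) (k : nat) : R := cc X k.
Definition zv  (X : cT) (l : nat) : R := cc X (5 + l).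
Definition xiv (X : cT) (k : nat) : R := cc X (8 + k).
Definition etv (X : cT) (l : nat) : R := cc X (13 + l).

(* The bracket [ , ] : v x v -> z in coordinates (component l = Z_i, Z_j,
   Z_k for l = 0,1,2).  Basis of v indexed 0:X_i 1:X_j 2:Y_i 3:Y_j 4:Y_k.
   [X_i,Y_j]=Z_k, [X_i,Y_k]=-Z_j, [X_j,Y_i]=-Z_k, [X_j,Y_k]=Z_i. *)
Definition brk (u w : nat -> R) (l : nat) : R :=
  match l with
  | 0%N => u 1%N * w 4%N - u 4%N * w 1%N
  | 1%N => - (u 0%N * w 4%N - u 4%N * w 0%N)
  | _ => (u 0%N * w 3%N - u 3%N * w 0%N) - (u 1%N * w 2%N - u 2%N * w 1%N)
  end.

Definition ebas (k : nat) : nat -> R := fun m => (m == k)%:R.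

(* Hamiltonian of the geodesic flow of the left-invariant metric g:
   H(q,p) = 1/2 |p o (dL_q)_e|^2 ; for q = exp(x+z), (dL_q)_e (a,c) =
   (a, c + 1/2 [x,a]). *)
Definition Ham (X : cT) : R :=
  2^-1 * (\sum_(k < 5)
             (xiv X k + 2^-1 * \sum_(l < 3) etv X l * brk (xv X) (ebas k) l) ^+ 2
          + \sum_(l < 3) etv X l ^+ 2).

(* Cotangent lift of left translation by gamma = exp(a + c/2) in Gamma,
   a in Z^5 (coeffs of X_i,...,Y_k), c in Z^3 (so the Z-part is c/2):
   q = (x,z) |-> (a + x, c/2 + z + 1/2 [a,x]),
   p = (xi,eta) |-> (xi - 1/2 <eta, [a, .]>, eta). *)
Definition gact (a c : nat -> int) (X : cT) : cT :=
  \row_(j < 16)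
    (if (j < 5)%N then xv X j + (a j)%:~R
     else if (j < 8)%N then
       zv X (j - 5) + 2^-1 * (c (j - 5)%N)%:~R
       + 2^-1 * brk (fun m => (a m)%:~R) (xv X) (j - 5)
     else if (j < 13)%N then
       xiv X (j - 8)
       - 2^-1 * \sum_(l < 3) etv X l * brk (fun m => (a m)%:~R) (ebas (j - 8)) l
     else etv X (j - 13)).

(* Functions on T^*M = T^*(Gamma\N) are the Gamma-invariant functions on
   T^*N. *)
Definition gamma_invariant (f : cT -> R) : Prop :=
  forall (a c : nat -> int) (X : cT), f (gact a c X) = f X.

Definition qi (i : 'I_8) : 'I_16 := inord i.
Definition pi_ (i : 'I_8) : 'I_16 := inord (8 + i).

Definition poisson (f g : cT -> R) (X : cT) : R :=
  \sum_(i < 8) (pdiff (qi i) f X * pdiff (pi_ i) g X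
                - pdiff (pi_ i) f X * pdiff (qi i) g X).

Definition jacobian (f : 'I_8 -> cT -> R) (X : cT) : 'M[R]_(8, 16) :=
  \matrix_(k < 8, j < 16) pdiff j (f k) X.

Definition completely_integrable_geodesic_flow : Prop :=
  exists f : 'I_8 -> cT -> R,
    (forall k, smooth (f k)) /\
    (forall k, gamma_invariant (f k)) /\
    (forall k X, poisson (f k) Ham X = 0) /\
    (forall k l X, poisson (f k) (f l) X = 0) /\
    exists U : set cT, open U /\ dense U /\
      forall X, U X -> row_free (jacobian f X).

End Calc.

From Pilot Require Import Defs.
From mathcomp Require Import all_boot all_order all_algebra.
From mathcomp Require Import all_classical all_reals all_analysis.
From mathcomp Require Import ring lra.
Set Implicit Arguments. Unset Strict Implicit. Unset Printing Implicit Defensive.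
Import Order.TTheory GRing.Theory Num.Theory.
Import numFieldNormedType.Exports.
Local Open Scope classical_set_scope.
Local Open Scope ring_scope.

(* The eight integrals are the central momenta [eta_i, eta_j, eta_k], the
   pairing [C] of [eta] with the momenta of [Y_i, Y_j, Y_k], the Hamiltonian
   [H], the norm [Q] of the horizontal momentum under [j(eta) : v -> v],
   [<j(eta) u, w> = <eta, [u, w]>], and two functions
   [F, G = e^(-1/eta_k^2) sin(2 pi J / eta_k)] with [J] equal to
   [xi_(Y_j) - eta_k x_(X_i) / 2], resp. [xi_(Y_i) + eta_k x_(X_j) / 2].
   [Gamma] moves these [J] by integer multiples of [eta_k], so [F] and [G] are
   [Gamma]-invariant although [J] is not, and the flat factor makes them
   smooth across [eta_k = 0].  Written as expressions in the coordinates of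
   [T^*N], smoothness becomes a structural induction and the vanishing of the
   Poisson brackets a family of polynomial identities.  The differentials are
   independent where [eta_k], [dF/dxi_(Y_j)], [dG/dxi_(Y_i)] and a 2x2 minor
   of [(dH, dQ)] are nonzero; this set is open, and dense because each
   condition is reached by an arbitrarily small shift along one or two
   coordinates that does not spoil the previous ones. *)

Section FlatFunction.
Variable R : realType.

Definition flat (t : R) : R := if t == 0 then 0 else expR (- (t ^+ 2)^-1).

Lemma flat0 : flat 0 = 0.
Proof. by rewrite /flat eqxx. Qed.

(* Set [y = t^-2]: [expR y] dominates both [y] and [y ^+ n.+1 / (n.+1)`!]. *)
Lemma flat_bound n t : `|(t^-1) ^+ n * flat t| <= ((n.+1)`!%:R + 1) * t ^+ 2.
Proof.
rewrite /flat; have [->|t0] := eqVneq t 0.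
  by rewrite mulr0 normr0 expr0n /= mulr0.
set y := (t ^+ 2)^-1; set E := expR (- y); set K := (n.+1)`!%:R : R.
have t20 : 0 < t ^+ 2 by rewrite exprn_even_gt0.
have y0 : 0 < y by rewrite invr_gt0.
have yt : y * t ^+ 2 = 1 by rewrite mulVf // gt_eqF.
have E0 : 0 < E := expR_gt0 _.
have EexpR : expR y * E = 1 by rewrite /E expRN mulfV // gt_eqF // expR_gt0.
have K0 : 0 < K by rewrite ltr0n fact_gt0.
have yE : y * E <= 1.
  by rewrite -EexpR ler_pM2r //; have := expR_ge1Dx y; lra.
have ynE : y ^+ n * y * E <= K.
  rewrite -[K]mulr1 -EexpR mulrA ler_pM2r // -exprSr.
  suff : y ^+ n.+1 / K <= expR y by rewrite ler_pdivrMr // mulrC.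
  by have := expR_ge1Dxn n (ltW y0); rewrite -/K; lra.
set b := `|(t^-1) ^+ n|.
have bb : b ^+ 2 = y ^+ n.
  by rewrite /b real_normK ?num_real // -exprM mulnC exprM exprVn.
have b1 : b <= y ^+ n + 1 by rewrite -bb; nra.
rewrite normrM (ger0_norm (ltW E0)) -/b.
have -> : ((n.+1)`!%:R + 1) * t ^+ 2 = t ^+ 2 * (K + 1) by rewrite mulrC.
apply: (le_trans (y := (y ^+ n + 1) * E)); first by rewrite ler_pM2r.
have -> : (y ^+ n + 1) * E = t ^+ 2 * (y ^+ n * y * E + y * E).
  by rewrite -[LHS]mul1r -{1}yt; ring.
by rewrite ler_pM2l //; lra.
Qed.

Lemma is_derive_pow (s : R) n :
  is_derive s 1 (fun t : R => t ^+ n) (n%:R * s ^+ n.-1).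
Proof.
apply: DeriveDef; first exact: exprn_derivable.
by rewrite exp_derive [_%:A]mulr1.
Qed.

Lemma is_derive_flat (s : R) : s != 0 ->
  is_derive s 1 flat (2 * (s^-1) ^+ 3 * flat s).
Proof.
move=> s0.
have s20 : s ^+ 2 != 0 by rewrite expf_neq0.
have dE := is_derive1_comp (is_derive_expR _)
  (is_deriveN (@is_deriveV R (fun t => t ^+ 2) s _ 1 s20 (is_derive_pow s 2))).
apply: (is_derive_eq (near_eq_is_derive _ dE)).
  near=> t; rewrite /flat /= ifF //; apply/negbTE.
  by near: t; exact: (@cvgr_neq0 _ _ _ _ _ id s cvg_id s0).
rewrite /flat ifF; last exact/negbTE.
rewrite /= exprVn.
rewrite -[X in X = _]/(expR (- (s ^+ 2)^-1) *
                     (- (- ((s ^+ 2) ^+ 2)^-1 * (2 * s ^+ 1)))).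
by field.
Unshelve. all: by end_near. Qed.

Lemma is_derive0_of_quadratic_bound (phi : R -> R) (K : R) : phi 0 = 0 ->
  (forall h, `|phi h| <= K * h ^+ 2) -> is_derive (0:R) (1:R) phi 0.
Proof.
move=> phi0 phiK.
have cv : (fun h : R => h^-1 *: ((phi \o shift 0) (h *: 1) - phi 0)) @ 0^'
          --> (0:R).
  apply/cvgr0Pnorm_lt => e e0.
  have eK : 0 < e / (`|K| + 1) by rewrite divr_gt0 // ltr_wpDl.
  near=> h.
  have h0 : h != 0 by near: h; exact: nbhs_dnbhs_neq.
  have hs : `|h| < e / (`|K| + 1) by near: h; exact: dnbhs0_lt.
  rewrite /= phi0 subr0 addr0 [h *: 1]mulr1 normrM normfV.
  have a0 : 0 < `|h| by rewrite normr_gt0.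
  have := phiK h; rewrite -(real_normK (num_real h)) => hb.
  rewrite ltr_pdivlMr ?ltr_wpDl // in hs.
  rewrite -(ltr_pM2l a0) mulrA mulfV ?gt_eqF // mul1r.
  have h1 : K * `|h| ^+ 2 <= `|K| * `|h| ^+ 2 by rewrite ler_pM2r ?exprn_gt0 ?ler_norm.
  have h2 : `|h| * (`|h| * (`|K| + 1)) < `|h| * e by rewrite ltr_pM2l.
  have h3 : 0 < `|h| ^+ 2 by rewrite exprn_gt0.
  rewrite expr2 in h1 h3; nra.
split; first exact: cvgP cv.
by rewrite /derive (cvg_lim _ cv).
Unshelve. all: by end_near. Qed.

Lemma is_derive_continuous (g : R -> R) (s d : R) :
  is_derive s (1:R) g d -> {for s, continuous g}.
Proof. by case=> /derivable1_diffP /differentiable_continuous. Qed.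

Definition trig (b : bool) (u : R) : R := if b then sin u else cos u.

Lemma is_derive_trig b (x : R) :
  is_derive x (1:R) (trig b) (if b then cos x else - sin x).
Proof. by case: b; [exact: is_derive_sin | exact: is_derive_cos]. Qed.

Lemma trig_le1 b x : `|trig b x| <= 1.
Proof. by rewrite ler_norml; case: b; rewrite /= ?sin_le1 ?sin_geN1 ?cos_le1 ?cos_geN1. Qed.

Lemma trigDn2pi b (w : R) (n : nat) : trig b (w + (pi *+ 2) *+ n) = trig b w.
Proof. by case: b; apply: periodicn; [exact: sinD2pi | exact: cosD2pi]. Qed.

(* [osc n b u t = t^-n e^(-1/t^2) sin(u/t)] (or [cos]); this vanishes to
   infinite order at [t = 0], so it extends smoothly by [0] there. *)
Definition osc (n : nat) (b : bool) (u t : R) : R :=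
  (t^-1) ^+ n * flat t * trig b (u * t^-1).
Arguments osc : simpl never.

Lemma osc_t0 n b u : osc n b u 0 = 0.
Proof. by rewrite /osc flat0 mulr0 mul0r. Qed.

Lemma osc_bound n b u t : `|osc n b u t| <= ((n.+1)`!%:R + 1) * t ^+ 2.
Proof.
rewrite /osc normrM -[X in _ <= X]mulr1.
by apply: ler_pM; rewrite ?normr_ge0 ?flat_bound ?trig_le1.
Qed.

Lemma osc_periodic n b (u t : R) (k : int) :
  osc n b (u + t * (2 * pi) * k%:~R) t = osc n b u t.
Proof.
have [->|t0] := eqVneq t 0; first by rewrite !osc_t0.
rewrite /osc; congr (_ * _).
have -> : (u + t * (2 * pi) * k%:~R) * t^-1 = u * t^-1 + (pi *+ 2) * k%:~R.
  by field.
case: k => n'; first by rewrite -[(Posz n')%:~R]/(n'%:R) mulr_natr trigDn2pi.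
rewrite NegzE mulrN mulr_natr.
by rewrite -[in RHS](subrK ((pi *+ 2) *+ n'.+1) (u * t^-1)) trigDn2pi.
Qed.

End FlatFunction.

Section Terms.
Variable R : realType.

(* Closed-form expressions in the 16 coordinates of [cT R]; every [TOsc]
   atom oscillates in coordinate 15, the momentum [eta_k]. *)
Inductive term : Type :=
| TZero | TConst of R | TVar of nat
| TAdd of term & term | TMul of term & term
| TOsc of nat & bool & term.

Fixpoint eval (e : term) (X : cT R) : R :=
  match e with
  | TZero => 0
  | TConst c => c
  | TVar k => cc X k
  | TAdd a b => eval a X + eval b X
  | TMul a b => eval a X * eval b X
  | TOsc n b J => osc n b (eval J X) (cc X 15)
  end.

Fixpoint tderiv (dv : nat -> R) (e : term) : term :=
  match e with
  | TZero => TZero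
  | TConst _ => TConst 0
  | TVar k => TConst (dv k)
  | TAdd a b => TAdd (tderiv dv a) (tderiv dv b)
  | TMul a b => TAdd (TMul (tderiv dv a) b) (TMul a (tderiv dv b))
  | TOsc n b J =>
      TAdd (TMul (TConst (- n%:R * dv 15)) (TOsc n.+1 b J))
        (TAdd (TMul (TConst (2 * dv 15)) (TOsc n.+3 b J))
          (TMul (TConst (if b then 1 else -1))
            (TAdd (TMul (tderiv dv J) (TOsc n.+1 (~~ b) J))
                 (TMul (TConst (- dv 15)) (TMul J (TOsc n.+2 (~~ b) J))))))
  end.

Lemma scaleR_mul (a b : R) : a *: b = a * b. Proof. by []. Qed.

Lemma cc_line (X v : cT R) (h : R) k : cc (h *: v + X) k = h * cc v k + cc X k.
Proof. by rewrite /cc !mxE. Qed.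

Lemma cc_continuous k : continuous (fun X : cT R => cc X k).
Proof. by move=> x; exact: coord_continuous. Qed.

Lemma is_derive_line (f : cT R -> R) (x v : cT R) (df : R) :
  is_derive (0:R) 1 (fun h : R => f (h *: v + x)) df -> is_derive x v f df.
Proof.
case=> d1 d2; split; first by apply/derivable1P.
rewrite -d2 /derive.
suff -> : (fun h : R => h^-1 *: (f (h *: v + x) - f x)) =
          (fun h : R => h^-1 *: (f ((h *: 1 + 0) *: v + x) - f (0 *: v + x))) by [].
by apply: funext => h; rewrite scale0r add0r addr0 [_%:A]mulr1.
Qed.

Lemma is_derive_affine (a b : R) : is_derive (0:R) (1:R) (fun h : R => h * a + b) a.
Proof.
have := is_deriveD (is_deriveM (@is_derive_id _ _ (0:R) (1:R))
  (is_derive_cst a (0:R) (1:R))) (is_derive_cst b (0:R) (1:R)).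
by move/is_derive_eq; apply; rewrite /= !scaleR_mul mul0r add0r mulr1 addr0.
Qed.

Lemma is_derive1M (f g : R -> R) (x df dg : R) : is_derive x (1:R) f df ->
  is_derive x (1:R) g dg -> is_derive x (1:R) (fun h => f h * g h) (f x * dg + g x * df).
Proof. by move=> a b; have := is_deriveM a b. Qed.

Lemma is_derive1_comp_app (f g : R -> R) (x a b : R) : is_derive (g x) (1:R) f a ->
  is_derive x (1:R) g b -> is_derive x (1:R) (fun h => f (g h)) (a * b).
Proof. by move=> a' b'; have := is_derive1_comp a' b'. Qed.

Lemma is_derive_osc n b (U : R -> R) dU (d t : R) : t != 0 ->
  is_derive (0:R) (1:R) U dU ->
  is_derive (0:R) (1:R) (fun h => osc n b (U h) (h * d + t))
    (- n%:R * d * osc n.+1 b (U 0) t + (2 * d * osc n.+3 b (U 0) t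
     + (if b then 1 else -1) * (dU * osc n.+1 (~~ b) (U 0) t
                                + - d * (U 0 * osc n.+2 (~~ b) (U 0) t)))).
Proof.
move=> t0 dUd.
have T0 : 0 * d + t != 0 by rewrite mul0r add0r.
have dT := is_derive_affine d t.
have dTi := @is_deriveV R (fun h => h * d + t) 0 _ 1 T0 dT.
have dA := is_derive1_comp_app (is_derive_pow _ n) dTi.
have dE := @is_derive1_comp_app (@flat R) (fun h => h * d + t) 0 _ _ (is_derive_flat T0) dT.
have dS := @is_derive1_comp_app (trig b) _ 0 _ _ (is_derive_trig b _) (is_derive1M dUd dTi).
move: (is_derive1M (is_derive1M dA dE) dS); clear dA dE dS dTi; move/is_derive_eq; apply.
rewrite /= !scaleR_mul mul0r add0r /osc -!exprVn; set u := t^-1.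
have -> : n%:R * u ^+ n.-1 * (- u ^+ 2 * d) = - (n%:R * u ^+ n.+1 * d).
  by case: n => [|m]; rewrite ?mul0r ?oppr0 // !exprS; ring.
by rewrite !exprS; case: b => /=; ring.
Qed.

(* At [t = 0] all the atoms vanish, and by [osc_bound] so does the derivative. *)
Lemma is_derive_osc_t0 n b (U : R -> R) (d : R) :
  is_derive (0:R) (1:R) (fun h => osc n b (U h) (h * d)) 0.
Proof.
apply: (is_derive0_of_quadratic_bound (K := ((n.+1)`!%:R + 1) * d ^+ 2)).
  by rewrite mul0r osc_t0.
move=> h; rewrite (_ : _ * h ^+ 2 = ((n.+1)`!%:R + 1) * (h * d) ^+ 2).
  exact: osc_bound.
by ring.
Qed.

Lemma is_derive_eval e (X v : cT R) :
  is_derive (0:R) (1:R) (fun h => eval e (h *: v + X)) (eval (tderiv (cc v) e) X).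
Proof.
elim: e => [|c|k|a IHa b IHb|a IHa b IHb|n b J IH] /=.
- exact: is_derive_cst.
- exact: is_derive_cst.
- under eq_fun do rewrite cc_line.
  exact: is_derive_affine.
- exact: is_deriveD.
- have := is_deriveM IHa IHb; move/is_derive_eq; apply.
  by rewrite /= scale0r add0r !scaleR_mul addrC mulrC.
- under eq_fun do rewrite cc_line.
  have [t0|t0] := eqVneq (cc X 15) 0; last first.
    by have := is_derive_osc n b (cc v 15) t0 IH; rewrite /= scale0r add0r.
  rewrite t0 !osc_t0 !(mulr0, addr0).
  under eq_fun do rewrite addr0.
  exact: is_derive_osc_t0.
Qed.

Lemma continuous_at_comp {T : topologicalType} (f : T -> R) (g : R -> R) x :
  {for x, continuous f} -> {for f x, continuous g} ->
  {for x, continuous (fun X => g (f X))}.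
Proof. exact: continuous_comp. Qed.

Lemma osc_continuous {T : topologicalType} n b (u t : T -> R) x :
  {for x, continuous u} -> {for x, continuous t} ->
  {for x, continuous (fun X => osc n b (u X) (t X))}.
Proof.
move=> cu ct; set K := ((n.+1)`!%:R + 1 : R).
have [t0|t0] := eqVneq (t x) 0.
  have cK : {for x, continuous (fun X => K * (t X * t X))}.
    exact: continuousM (@cst_continuous _ _ K x) (continuousM ct ct).
  rewrite /prop_for /continuous_at /= t0 osc_t0.
  apply: (@squeeze_cvgr _ (nbhs x) _ _ (fun X => - (K * (t X * t X)))
                                       (fun X => K * (t X * t X))).
  - by near=> X; rewrite -ler_norml -expr2 osc_bound.
  - by have := continuousN cK; rewrite /prop_for /continuous_at /= t0 !mulr0 oppr0.
  - by have := cK; rewrite /prop_for /continuous_at /= t0 !mulr0.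
rewrite /osc; apply: continuousM; first apply: continuousM.
- apply: (continuous_at_comp (g := fun s => (s^-1) ^+ n) ct).
  apply: (continuous_at_comp (f := @GRing.inv R) (g := fun s => s ^+ n)).
    exact: inv_continuous.
  exact: is_derive_continuous (is_derive_pow _ n).
- apply: (continuous_at_comp (g := @flat R) ct).
  exact: is_derive_continuous (is_derive_flat t0).
- apply: (continuous_at_comp (f := fun X => u X * (t X)^-1) (g := trig b)).
    exact: continuousM cu (continuous_at_comp ct (inv_continuous t0)).
  exact: is_derive_continuous (is_derive_trig b _).
Unshelve. all: by end_near. Qed.

Lemma eval_continuous e : continuous (eval e).
Proof.
elim: e => [|c|k|a IHa b IHb|a IHa b IHb|n b J IH] x /=.
- exact: cst_continuous.
- exact: cst_continuous.
- exact: cc_continuous.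
- exact: continuousD (IHa x) (IHb x).
- exact: continuousM (IHa x) (IHb x).
- by apply: osc_continuous; [exact: IH | exact: cc_continuous].
Qed.

Lemma pdiff_eval (i : 'I_16) e : pdiff i (eval e) = eval (tderiv (cc (evec R i)) e).
Proof.
by apply: funext => X; rewrite /pdiff; have [_ ->] := is_derive_line (is_derive_eval e X (evec R i)).
Qed.

Lemma smooth_eval e : smooth (eval e).
Proof.
move=> s; have [e' ->] : exists e', iter_pdiff s (eval e) = eval e'.
  elim: s => [|i s [e' IH]] /=; first by exists e.
  by exists (tderiv (cc (evec R i)) e'); rewrite IH pdiff_eval.
split; first exact: eval_continuous.
by move=> X i; have [] := is_derive_line (is_derive_eval e' X (evec R i)).
Qed.

Fixpoint coords_in (P : pred nat) (e : term) : bool :=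
  match e with
  | TZero | TConst _ => true
  | TVar k => P k
  | TAdd a b | TMul a b => coords_in P a && coords_in P b
  | TOsc _ _ J => P 15%N && coords_in P J
  end.

Lemma eval_ext (P : pred nat) e (X Y : cT R) : coords_in P e ->
  {in P, forall k, cc Y k = cc X k} -> eval e Y = eval e X.
Proof.
move=> + YX; elim: e => [|c|k|a IHa b IHb|a IHa b IHb|n b J IH] //=.
- exact: YX.
- by case/andP => /IHa -> /IHb ->.
- by case/andP => /IHa -> /IHb ->.
- by case/andP => /YX -> /IH ->.
Qed.

Lemma tderiv_ext (P : pred nat) (dv dv' : nat -> R) e X : coords_in P e ->
  {in P, dv =1 dv'} -> eval (tderiv dv e) X = eval (tderiv dv' e) X.
Proof.
move=> + dvE; elim: e => [|c|k|a IHa b IHb|a IHa b IHb|n b J IH] //=.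
- by move/dvE ->.
- by case/andP => /IHa -> /IHb ->.
- by case/andP => /IHa -> /IHb ->.
- by case/andP => /dvE -> /IH ->.
Qed.

Lemma eval_TMul (a b : term) X : eval (TMul a b) X = eval a X * eval b X.
Proof. by []. Qed.

Definition tadd (a b : term) : term :=
  match a, b with
  | TZero, _ => b
  | _, TZero => a
  | _, _ => TAdd a b
  end.

Definition tmul (a b : term) : term :=
  match a, b with
  | TZero, _ | _, TZero => TZero
  | _, _ => TMul a b
  end.

Arguments tadd : simpl nomatch.
Arguments tmul : simpl nomatch.

Lemma eval_tadd a b X : eval (tadd a b) X = eval a X + eval b X.
Proof. by case: a; case: b => * /=; rewrite ?add0r ?addr0. Qed.

Lemma eval_tmul a b X : eval (tmul a b) X = eval a X * eval b X.
Proof. by case: a; case: b => * /=; rewrite ?mul0r ?mulr0. Qed.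

(* [tderiv (ebas R m)] with the zero terms pruned, so that the partial
   derivatives of concrete terms stay small under [simpl]. *)
Fixpoint pderiv (m : nat) (e : term) : term :=
  match e with
  | TZero | TConst _ => TZero
  | TVar k => if m == k then TConst 1 else TZero
  | TAdd a b => tadd (pderiv m a) (pderiv m b)
  | TMul a b => tadd (tmul (pderiv m a) b) (tmul a (pderiv m b))
  | TOsc n b J =>
      if m == 15 then
      TAdd (TMul (TConst (- n%:R)) (TOsc n.+1 b J))
        (TAdd (TMul (TConst 2) (TOsc n.+3 b J))
          (TMul (TConst (if b then 1 else -1))
            (TAdd (tmul (pderiv m J) (TOsc n.+1 (~~ b) J))
                 (TMul (TConst (-1)) (TMul J (TOsc n.+2 (~~ b) J))))))
      else tmul (TConst (if b then 1 else -1)) (tmul (pderiv m J) (TOsc n.+1 (~~ b) J))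
  end.

Lemma eval_pderiv m e X : eval (pderiv m e) X = eval (tderiv (ebas R m) e) X.
Proof.
elim: e => [|c|k|a IHa b IHb|a IHa b IHb|n b J IH] /=.
- by [].
- by [].
- by rewrite /ebas [k == m]eq_sym; case: (m == k).
- by rewrite eval_tadd IHa IHb.
- by rewrite eval_tadd !eval_tmul IHa IHb.
- by rewrite /ebas [15 == m]eq_sym; case: (m == 15) => /=; rewrite ?eval_tmul IH /=; ring.
Qed.

Definition coord16 : pred nat := fun k => (k < 16)%N.

Lemma cc_evec m k : (m < 16)%N -> (k < 16)%N -> cc (evec R (inord m)) k = ebas R m k.
Proof.
move=> m16 k16; rewrite /cc /evec mxE /ebas [k == m]eq_sym.
suff -> : (inord m == inord k :> 'I_16) = (m == k) by [].
by apply/eqP/eqP => [/(congr1 (@nat_of_ord 16))|->]; rewrite ?inordK.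
Qed.

Lemma pdiff_eval_coord m e X : (m < 16)%N -> coords_in coord16 e ->
  pdiff (inord m) (eval e) X = eval (pderiv m e) X.
Proof.
move=> m16 e16; rewrite pdiff_eval eval_pderiv.
by apply: (tderiv_ext X e16) => k k16; exact: cc_evec.
Qed.

Lemma poisson_eval e1 e2 X : coords_in coord16 e1 -> coords_in coord16 e2 ->
  poisson (eval e1) (eval e2) X =
  \sum_(i < 8) (eval (pderiv i e1) X * eval (pderiv (8 + i) e2) X
               - eval (pderiv (8 + i) e1) X * eval (pderiv i e2) X).
Proof.
move=> h1 h2; apply: eq_bigr => i _.
have i16 : (i < 16)%N by rewrite (ltn_trans (ltn_ord i)).
have i8 : (8 + i < 16)%N by rewrite -[16%N]/(8 + 8)%N ltn_add2l.
by rewrite /qi /pi_ !pdiff_eval_coord.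
Qed.

Lemma poisson_antisym (f g : cT R -> R) X : poisson f g X = - poisson g f X.
Proof.
rewrite /poisson -sumrN; apply: eq_bigr => i _.
by rewrite opprB [X in _ = X - _]mulrC [X in _ = _ - X]mulrC.
Qed.

End Terms.

Arguments TZero {R}.
Arguments TVar {R}.

Section Integrals.
Variable R : realType.

Definition tsub (a b : term R) := TAdd a (TMul (TConst (-1)) b).
Definition thalf : term R := TConst 2^-1.

Lemma eval_tsub (a b : term R) X : eval (tsub a b) X = eval a X - eval b X.
Proof. by rewrite /= mulN1r. Qed.
Definition tsq (a : term R) := TMul a a.

(* [lmom k] is the left-invariant momentum [xi o (dL_q)_e] on the k-th basis
   vector of [v]; see the definition of [Ham]. *)
Definition lmom (k : nat) : term R :=
  match k with
  | 0 => TAdd (TVar 8) (TMul thalf (tsub (TMul (TVar 14) (TVar 4)) (TMul (TVar 15) (TVar 3))))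
  | 1 => TAdd (TVar 9) (TMul thalf (tsub (TMul (TVar 15) (TVar 2)) (TMul (TVar 13) (TVar 4))))
  | 2 => tsub (TVar 10) (TMul thalf (TMul (TVar 15) (TVar 1)))
  | 3 => TAdd (TVar 11) (TMul thalf (TMul (TVar 15) (TVar 0)))
  | _ => TAdd (TVar 12) (TMul thalf (tsub (TMul (TVar 13) (TVar 1)) (TMul (TVar 14) (TVar 0))))
  end.

(* [jmom k = <j(eta) e_k, lmom>], where [<j(eta) u, w> = <eta, [u, w]>]. *)
Definition jmom (k : nat) : term R :=
  match k with
  | 0 => tsub (TMul (TVar 15) (lmom 3)) (TMul (TVar 14) (lmom 4))
  | 1 => tsub (TMul (TVar 13) (lmom 4)) (TMul (TVar 15) (lmom 2))
  | 2 => TMul (TVar 15) (lmom 1)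
  | 3 => TMul (TConst (-1)) (TMul (TVar 15) (lmom 0))
  | _ => tsub (TMul (TVar 14) (lmom 0)) (TMul (TVar 13) (lmom 1))
  end.

Definition ham : term R :=
  TMul thalf (TAdd (TAdd (TAdd (TAdd (TAdd (TAdd (TAdd
    (tsq (lmom 0)) (tsq (lmom 1))) (tsq (lmom 2))) (tsq (lmom 3))) (tsq (lmom 4)))
    (tsq (TVar 13))) (tsq (TVar 14))) (tsq (TVar 15))).

Definition jnorm : term R :=
  TAdd (TAdd (TAdd (TAdd (tsq (jmom 0)) (tsq (jmom 1))) (tsq (jmom 2)))
    (tsq (jmom 3))) (tsq (jmom 4)).

Definition ypair : term R :=
  TAdd (TAdd (TMul (TVar 13) (TVar 10)) (TMul (TVar 14) (TVar 11))) (TMul (TVar 15) (TVar 12)).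

Definition phaseF : term R :=
  TMul (TConst (2 * pi)) (tsub (TVar 11) (TMul thalf (TMul (TVar 15) (TVar 0)))).
Definition phaseG : term R :=
  TMul (TConst (2 * pi)) (TAdd (TVar 10) (TMul thalf (TMul (TVar 15) (TVar 1)))).

Definition oscF : term R := TOsc 0 true phaseF.
Definition oscG : term R := TOsc 0 true phaseG.

Definition first_integral (k : nat) : term R :=
  match k with
  | 0 => TVar 13 | 1 => TVar 14 | 2 => TVar 15 | 3 => ypair | 4 => ham
  | 5 => jnorm | 6 => oscF | _ => oscG
  end.

Lemma first_integral_coord16 k : coords_in coord16 (first_integral k).
Proof. by do 7 (case: k => [|k] //). Qed.

Lemma Ham_eval : Ham (R:=R) = eval ham.
Proof.
apply: funext => X; rewrite /Ham /brk /ebas /xiv /etv /xv /=.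
rewrite !big_ord_recr !big_ord0 /= /subn /addn /=.
ring.
Qed.

Lemma cc_gact a c (X : cT R) k : (k < 16)%N -> cc (gact a c X) k =
  (if (k < 5)%N then xv X k + (a k)%:~R
   else if (k < 8)%N then
       zv X (k - 5)%N + 2^-1 * (c (k - 5)%N)%:~R
       + 2^-1 * brk (fun m => (a m)%:~R) (xv X) (k - 5)%N
   else if (k < 13)%N then
       xiv X (k - 8)%N
       - 2^-1 * \sum_(l < 3) etv X l * brk (fun m => (a m)%:~R) (ebas R (k - 8)%N) l
   else etv X (k - 13)%N).
Proof. by move=> k16; rewrite /gact /cc mxE inordK. Qed.

Lemma first_integral_gamma_invariant k : gamma_invariant (eval (first_integral k)).
Proof.
move=> a c X.
case: k => [|[|[|[|[|[|[|k]]]]]]];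
  rewrite /= !cc_gact //=; unfold xv, zv, xiv, etv, brk, ebas;
  rewrite ?big_ord_recr ?big_ord0 /=; unfold subn, addn; simpl.
- by ring.
- by ring.
- by ring.
- rewrite -[in RHS](osc_periodic _ _ _ _ (- a 0%N)); congr osc.
  by rewrite intrN; field.
- by rewrite -[in RHS](osc_periodic _ _ _ _ (a 1%N)); congr osc; field.
Qed.

Lemma first_integrals_commute_lt k l X : (k < l < 8)%N ->
  poisson (eval (first_integral k)) (eval (first_integral l)) X = 0.
Proof.
case/andP; case: k => [|[|[|[|[|[|[|k]]]]]]]; case: l => [|[|[|[|[|[|[|[|l]]]]]]]] // _ _.
all: rewrite poisson_eval ?first_integral_coord16 // !big_ord_recr big_ord0 /=; ring.
Qed.

Lemma first_integrals_commute k l X : (k < 8)%N -> (l < 8)%N ->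
  poisson (eval (first_integral k)) (eval (first_integral l)) X = 0.
Proof.
move=> k8 l8; case: (ltngtP k l) => [kl|lk|<-].
- by rewrite first_integrals_commute_lt ?kl.
- by rewrite poisson_antisym first_integrals_commute_lt ?lk ?oppr0.
- by have := poisson_antisym (eval (first_integral k)) (eval (first_integral k)) X; lra.
Qed.

End Integrals.

Arguments lmom {R}.
Arguments ham {R}.
Arguments jnorm {R}.
Arguments phaseF {R}.
Arguments phaseG {R}.
Arguments oscF {R}.
Arguments oscG {R}.
Arguments first_integral {R}.

Section Regularity.
Variable R : realType.

Definition minorHQ : term R :=
  tsub (TMul (pderiv 8 ham) (pderiv 9 jnorm)) (TMul (pderiv 9 ham) (pderiv 8 jnorm)).

Lemma eval_minorHQ_pderiv (X : cT R) : eval minorHQ X =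
  eval (pderiv 8 ham) X * eval (pderiv 9 jnorm) X
  - eval (pderiv 9 ham) X * eval (pderiv 8 jnorm) X.
Proof. by rewrite /minorHQ eval_tsub !eval_TMul. Qed.

Definition nonvanishing (e : term R) : set (cT R) := fun X => eval e X != 0.

Definition osc_regular : set (cT R) :=
  nonvanishing (TVar 15) `&` nonvanishing (pderiv 11 oscF)
  `&` nonvanishing (pderiv 10 oscG).

Definition regular : set (cT R) := osc_regular `&` nonvanishing minorHQ.

Lemma open_nonvanishing e : open (nonvanishing e).
Proof.
rewrite (_ : nonvanishing e = eval e @^-1` [set x | x != 0]) //.
by apply: open_comp => [x _|]; [exact: eval_continuous | exact: open_neq].
Qed.

Lemma open_regular : open regular.
Proof.
by rewrite /regular /osc_regular; repeat apply: openI; exact: open_nonvanishing.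
Qed.

Lemma open_line_small (O : set (cT R)) (X v : cT R) (P : R -> Prop) :
  open O -> O X -> (forall e : R, 0 < e -> exists2 h : R, `|h| < e & P h) ->
  exists h : R, O (h *: v + X) /\ P h.
Proof.
move=> oO OX hP.
have cg : {for (0:R), continuous (fun h : R => h *: v + X)}.
  apply: (@continuousD _ _ _ (fun h : R => h *: v) (cst X)).
    exact: (@continuousZr_tmp _ _ _ id v 0 cvg_id).
  exact: cst_continuous.
have /nbhs_ballP[e e0 eO] : nbhs (0:R) ((fun h : R => h *: v + X) @^-1` O).
  by apply: cg; rewrite /= scale0r add0r; apply: open_nbhs_nbhs.
have [h he Ph] := hP e e0.
by exists h; split => //; apply: eO; rewrite /ball /= sub0r normrN.
Qed.

(* Density is propagated along a chain [setT, A_1, ..., regular], each link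
   obtained by a small shift of a point of [A_i] into [A_(i+1)]. *)
Lemma open_meet_shift (A B : set (cT R)) (v : cT R -> cT R) :
  (forall X, A X -> forall e : R, 0 < e ->
     exists2 h : R, `|h| < e & B (h *: v X + X)) ->
  forall O, open O -> O `&` A !=set0 -> O `&` B !=set0.
Proof.
move=> AB O oO [X [OX AX]].
have [h [Oh Bh]] := open_line_small (v X) oO OX (AB X AX).
by exists (h *: v X + X).
Qed.

Lemma small_nonzero_shift (a : R) (e : R) : 0 < e -> exists2 h : R, `|h| < e & a + h != 0.
Proof.
move=> e0; have [->|an] := eqVneq a 0; last by exists 0; rewrite ?normr0 ?addr0.
exists (e / 2); last by rewrite add0r gt_eqF // divr_gt0.
by rewrite ger0_norm ?divr_ge0 ?ltW // ltr_pdivrMr // ltr_pMr // ltr1n.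
Qed.

Lemma small_cos_nonzero (th c : R) : c != 0 -> forall e : R, 0 < e ->
  exists2 h : R, `|h| < e & cos (th + c * h) != 0.
Proof.
move=> c0 e e0.
have [cz|cn] := eqVneq (cos th) 0; last by exists 0; rewrite ?normr0 ?mulr0 ?addr0.
have ca : 0 < `|c| by rewrite normr_gt0.
have ec : 0 < e * `|c| by rewrite mulr_gt0.
set d := e * `|c| / (e * `|c| + 1).
have d0 : 0 < d by rewrite divr_gt0 // ltr_wpDr.
have d1 : d < 1 by rewrite ltr_pdivrMr ?ltr_wpDr // mul1r ltrDl.
exists (d / c).
  rewrite normrM normfV ltr_pdivrMr // ger0_norm ?ltW //.
  by rewrite /d ltr_pdivrMr ?ltr_wpDr // ltr_pMr // ltrDr.
rewrite mulrC divfK // cosD cz mul0r sub0r oppr_eq0 mulf_neq0 //.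
  apply/eqP => s0; have := cos2Dsin2 th; rewrite cz s0 expr0n /= addr0 => /eqP.
  by rewrite eq_sym oner_eq0.
by rewrite gt_eqF // sin2_gt0 // d0 /= (lt_trans d1) // ltr1n.
Qed.

(* A nonzero quadratic cannot vanish at the three points [0, e/2, e/4]. *)
Lemma small_quadratic_nonzero (A B C : R) : A != 0 -> forall e : R, 0 < e ->
  exists2 h : R, `|h| < e & A * h ^+ 2 + B * h + C != 0.
Proof.
move=> A0 e e0.
have [Cz|Cn] := eqVneq C 0; last by exists 0; rewrite ?normr0 ?expr0n /= ?mulr0 ?add0r.
have small k : (1 < k)%N -> `|e / k%:R| < e.
  move=> k1; have k0 : 0 < k%:R :> R by rewrite ltr0n ltnW.
  by rewrite ger0_norm ?divr_ge0 ?ltW // ltr_pdivrMr // ltr_pMr // ltr1n.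
have lin0 k : (0 < k)%N -> A * (e / k%:R) ^+ 2 + B * (e / k%:R) + C = 0 ->
    A * (e / k%:R) + B = 0.
  move=> k0; rewrite Cz addr0 => z.
  apply: (mulIf (x := e / k%:R)); first by rewrite gt_eqF // divr_gt0 ?ltr0n.
  by rewrite mul0r -z; ring.
have [/(lin0 2%N isT) r2|] := eqVneq (A * (e / 2) ^+ 2 + B * (e / 2) + C) 0; last first.
  by exists (e / 2); rewrite ?small.
exists (e / 4); rewrite ?small //; apply/eqP => /(lin0 4%N isT) r4.
have : A * (e / 4) = 0.
  have -> : A * (e / 4) = (A * (e / 2) + B) - (A * (e / 4) + B) by field.
  by rewrite r2 r4 subr0.
by move/eqP; rewrite !mulf_eq0 (negbTE A0) (gt_eqF e0) invr_eq0 pnatr_eq0.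
Qed.

Lemma eval_shift_free (P : pred nat) e (X v : cT R) (h : R) : coords_in P e ->
  {in P, forall k, cc v k = 0} -> eval e (h *: v + X) = eval e X.
Proof.
move=> eP v0; apply: (eval_ext eP) => k /v0 vk.
by rewrite cc_line vk mulr0 add0r.
Qed.

Lemma evec_coord_off m : (m < 16)%N ->
  {in [pred k | (k < 16) && (k != m)]%N, forall k, cc (evec R (inord m)) k = 0}.
Proof.
move=> m16 k /andP[k16 km]; rewrite cc_evec // /ebas.
by rewrite (negbTE km).
Qed.

Lemma nonvanishing_shift_free (P : pred nat) e (X v : cT R) (h : R) : coords_in P e ->
  {in P, forall k, cc v k = 0} -> nonvanishing e (h *: v + X) = nonvanishing e X.
Proof. by move=> eP v0; rewrite /nonvanishing /= (eval_shift_free _ _ eP v0). Qed.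

Lemma nonvanishing_shift_evec m e (X : cT R) h : (m < 16)%N ->
  coords_in [pred k | (k < 16) && (k != m)]%N e ->
  nonvanishing e (h *: evec R (inord m) + X) = nonvanishing e X.
Proof. by move=> m16 em; rewrite (nonvanishing_shift_free _ _ em (evec_coord_off m16)). Qed.

Lemma cc_shift_evec m h (X : cT R) k : (m < 16)%N -> (k < 16)%N ->
  cc (h *: evec R (inord m) + X) k = cc X k + (k == m)%:R * h.
Proof. by move=> m16 k16; rewrite cc_line cc_evec // /ebas mulrC addrC. Qed.

Lemma osc1_neq0 (u t : R) : t != 0 -> cos (u * t^-1) != 0 -> osc 1 false u t != 0.
Proof.
move=> t0 c0; rewrite /osc /trig /flat (negbTE t0) expr1.
by rewrite !mulf_neq0 // ?invr_eq0 // gt_eqF // expR_gt0.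
Qed.

Lemma small_osc1_nonzero (u c t : R) : t != 0 -> c != 0 -> forall e : R, 0 < e ->
  exists2 h : R, `|h| < e & osc 1 false (u + c * h) t != 0.
Proof.
move=> t0 c0 e e0.
have [h he ch] := small_cos_nonzero (u * t^-1) (mulf_neq0 c0 (invr_neq0 t0)) e0.
by exists h => //; apply: osc1_neq0; rewrite // mulrDl mulrAC.
Qed.

Lemma eval_pderiv_oscF (Y : cT R) :
  eval (pderiv 11 oscF) Y = 2 * pi * osc 1 false (eval phaseF Y) (cc Y 15).
Proof. by rewrite /=; ring. Qed.

Lemma eval_pderiv_oscG (Y : cT R) :
  eval (pderiv 10 oscG) Y = 2 * pi * osc 1 false (eval phaseG Y) (cc Y 15).
Proof. by rewrite /=; ring. Qed.

Lemma two_pi_neq0 : 2 * pi != 0 :> R.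
Proof. by rewrite mulf_neq0 ?pnatr_eq0 // gt_eqF // pi_gt0. Qed.

(* Shifting [xi_(Y_j)] (resp. [xi_(Y_i)]) by [h] moves the phase of [F]
   (resp. [G]) by [2 pi h] and leaves [eta_k] alone. *)
Lemma shift_oscF X : nonvanishing (TVar 15) X -> forall e : R, 0 < e ->
  exists2 h : R, `|h| < e &
    (nonvanishing (TVar 15) `&` nonvanishing (pderiv 11 oscF))
      (h *: evec R (inord 11) + X).
Proof.
move=> t0 e e0.
have [h he Fh] := small_osc1_nonzero (eval phaseF X) t0 two_pi_neq0 e0.
exists h => //; split; first by rewrite nonvanishing_shift_evec.
rewrite /nonvanishing eval_pderiv_oscF mulf_neq0 ?two_pi_neq0 //.
have -> : eval phaseF (h *: evec R (inord 11) + X) = eval phaseF X + 2 * pi * h.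
  by rewrite /= !cc_shift_evec //=; ring.
by rewrite cc_shift_evec //= mulr0n mul0r addr0.
Qed.

Lemma shift_oscG X :
  (nonvanishing (TVar 15) `&` nonvanishing (pderiv 11 oscF)) X ->
  forall e : R, 0 < e -> exists2 h : R, `|h| < e & osc_regular (h *: evec R (inord 10) + X).
Proof.
move=> [t0 F0] e e0.
have [h he Gh] := small_osc1_nonzero (eval phaseG X) t0 two_pi_neq0 e0.
exists h => //; split; first by split; rewrite nonvanishing_shift_evec.
rewrite /nonvanishing eval_pderiv_oscG mulf_neq0 ?two_pi_neq0 //.
have -> : eval phaseG (h *: evec R (inord 10) + X) = eval phaseG X + 2 * pi * h.
  by rewrite /= !cc_shift_evec //=; ring.
by rewrite cc_shift_evec //= mulr0n mul0r addr0.
Qed.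

Lemma shift_eta_k (X : cT R) : setT X -> forall e : R, 0 < e ->
  exists2 h : R, `|h| < e & nonvanishing (TVar 15) (h *: evec R (inord 15) + X).
Proof.
move=> _ e e0; have [h he h0] := small_nonzero_shift (cc X 15) e0.
by exists h; rewrite // /nonvanishing /= cc_shift_evec //= mulr1n mul1r.
Qed.

Lemma shift_eta_i X : osc_regular X -> forall e : R, 0 < e ->
  exists2 h : R, `|h| < e &
    (osc_regular `&` nonvanishing (TVar 13)) (h *: evec R (inord 13) + X).
Proof.
move=> [[t0 F0] G0] e e0; have [h he h0] := small_nonzero_shift (cc X 13) e0.
exists h => //; split; first by split; [split|]; rewrite nonvanishing_shift_evec.
by rewrite /nonvanishing /= cc_shift_evec //= mulr1n mul1r.
Qed.

Lemma eval_minorHQ (Y : cT R) : eval minorHQ Y =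
  2 * ((cc Y 13 ^+ 2 - cc Y 14 ^+ 2) * eval (lmom 0) Y * eval (lmom 1) Y
       - cc Y 13 * cc Y 14 * (eval (lmom 0) Y ^+ 2 - eval (lmom 1) Y ^+ 2)).
Proof. by rewrite /minorHQ /=; field. Qed.

(* Along this direction [lmom 0] moves by [h] and [lmom 1] by [lam h], so that
   [minorHQ] becomes a quadratic in [h] with leading coefficient
   [2 eta_i^2] (if [eta_j = 0]) or [- 2 eta_i eta_j]. *)
Definition minor_direction (X : cT R) : cT R :=
  evec R (inord 8) + (if cc X 14 == 0 then 1 else 0) *: evec R (inord 9).

Lemma cc_shift_minor h (X : cT R) k : (k < 16)%N ->
  cc (h *: minor_direction X + X) k =
  cc X k + h * ((k == 8)%:R + (if cc X 14 == 0 then 1 else 0) * (k == 9)%:R).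
Proof.
move=> k16; rewrite cc_line addrC; congr (_ + _ * _).
by rewrite /minor_direction addrC cc_line !cc_evec // /ebas addrC.
Qed.

Lemma shift_minor X : (osc_regular `&` nonvanishing (TVar 13)) X ->
  forall e : R, 0 < e ->
  exists2 h : R, `|h| < e & regular (h *: minor_direction X + X).
Proof.
move=> [FX e00] e e0.
set lam : R := if cc X 14 == 0 then 1 else 0.
set E0 := cc X 13; set E1 := cc X 14.
set p0 := eval (lmom 0) X; set p1 := eval (lmom 1) X.
set A := 2 * ((E0 ^+ 2 - E1 ^+ 2) * lam - E0 * E1 * (1 - lam ^+ 2)).
set B := 2 * ((E0 ^+ 2 - E1 ^+ 2) * (p0 * lam + p1) - E0 * E1 * (2 * p0 - 2 * lam * p1)).
have A0 : A != 0.
  rewrite /A /lam -/E1; have [E10|E10] := eqVneq E1 0.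
    by rewrite E10 expr0n /= !subr0 mulr1 mulr0 mul0r subr0 mulf_neq0 ?pnatr_eq0 ?expf_neq0.
  by rewrite mulr0 expr0n /= subr0 mulr1 add0r mulf_neq0 ?pnatr_eq0 ?oppr_eq0 ?mulf_neq0.
have [h he Mh] := small_quadratic_nonzero B (eval minorHQ X) A0 e0.
exists h => //; split.
  have v0 : {in [pred k | (k < 16) && (k != 8) && (k != 9)]%N,
      forall k, cc (minor_direction X) k = 0}.
    move=> k /andP[/andP[k16 k8] k9].
    by rewrite /minor_direction addrC cc_line !cc_evec // /ebas (negbTE k8) (negbTE k9) mulr0 addr0.
  by case: FX => [[? ?] ?]; split; [split|]; rewrite (nonvanishing_shift_free _ _ _ v0).
rewrite /nonvanishing eval_minorHQ.
have -> : eval (lmom 0) (h *: minor_direction X + X) = p0 + h.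
  by rewrite /p0 /p1 /lam /= !cc_shift_minor //=; ring.
have -> : eval (lmom 1) (h *: minor_direction X + X) = p1 + lam * h.
  by rewrite /p0 /p1 /lam /= !cc_shift_minor //=; ring.
rewrite !cc_shift_minor //= -/lam -/E0 -/E1.
apply: contra Mh => /eqP M0; apply/eqP; rewrite -M0.
by rewrite eval_minorHQ -/E0 -/E1 -/p0 -/p1 /A /B; ring.
Qed.

Lemma dense_regular : dense regular.
Proof.
move=> O [X OX] oO.
apply: (open_meet_shift shift_minor oO); apply: (open_meet_shift shift_eta_i oO).
apply: (open_meet_shift shift_oscG oO); apply: (open_meet_shift shift_oscF oO).
by apply: (open_meet_shift shift_eta_k oO); exists X.
Qed.

End Regularity.

Arguments minorHQ {R}.

Section Independence.
Variable R : realType.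

Lemma cramer2_eq0 (a b p q p' q' : R) : a * p + b * q = 0 -> a * p' + b * q' = 0 ->
  p * q' - p' * q != 0 -> a = 0 /\ b = 0.
Proof.
move=> e1 e2 d0.
have ea : a * (p * q' - p' * q) = 0.
  have -> : a * (p * q' - p' * q) = q' * (a * p + b * q) - q * (a * p' + b * q') by ring.
  by rewrite e1 e2 !mulr0 subr0.
have eb : b * (p * q' - p' * q) = 0.
  have -> : b * (p * q' - p' * q) = p * (a * p' + b * q') - p' * (a * p + b * q) by ring.
  by rewrite e1 e2 !mulr0 subr0.
by move/eqP: ea; move/eqP: eb; rewrite !mulf_eq0 (negbTE d0) !orbF => /eqP -> /eqP ->.
Qed.

Lemma row_free_jacobian (X : cT R) : regular X ->
  row_free (Defs.jacobian (fun k : 'I_8 => eval (first_integral k)) X).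
Proof.
case=> [[[t0 F0] G0] M0]; apply: inj_row_free => v vJ.
set w := fun k : nat => v ord0 (inord k).
have col j : (j < 16)%N -> \sum_(k < 8) w k * eval (pderiv j (first_integral k)) X = 0.
  move=> j16; have := congr1 (fun M : 'M[R]_(1, 16) => M ord0 (inord j)) vJ.
  rewrite !mxE => vJj; rewrite -[RHS]vJj; apply: eq_bigr => k _.
  by rewrite mxE /w inord_val pdiff_eval_coord ?first_integral_coord16.
move: (col 8%N isT) (col 9%N isT) (col 10%N isT) (col 11%N isT)
  (col 12%N isT) (col 13%N isT) (col 14%N isT) (col 15%N isT) => c8 c9 c10 c11 c12 c13 c14 c15.
(* The system is triangular: the columns [xi_(X_i)], [xi_(X_j)] only see [H]
   and [Q]; then [xi_(Y_k)], [xi_(Y_j)], [xi_(Y_i)] isolate [C], [F], [G], and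
   the [eta] columns the central momenta. *)
rewrite /nonvanishing eval_minorHQ_pderiv in M0.
with_strategy opaque [ham jnorm] (rewrite /nonvanishing /= in t0 F0 G0;
  rewrite !big_ord_recr !big_ord0 /= in c8 c9 c10 c11 c12 c13 c14 c15).
rewrite !(mulr0, mul0r, mulr1, mul1r, add0r, addr0) in F0 G0 c8 c9 c10 c11 c12 c13 c14 c15.
have [w4 w5] := cramer2_eq0 c8 c9 M0.
rewrite w4 w5 !(mul0r, add0r, addr0) in c10 c11 c12 c13 c14 c15.
have w3 : w 3%N = 0 by move/eqP: c12; rewrite mulf_eq0 (negbTE t0) orbF => /eqP.
rewrite w3 !(mul0r, add0r) in c10 c11 c13 c14 c15.
have w6 : w 6%N = 0 by move/eqP: c11; rewrite mulf_eq0 (negbTE F0) orbF => /eqP.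
have w7 : w 7%N = 0 by move/eqP: c10; rewrite mulf_eq0 (negbTE G0) orbF => /eqP.
rewrite w6 w7 !(mul0r, addr0) in c13 c14 c15.
apply/rowP => k; rewrite mxE -(inord_val k) -/(w k).
by case: k => k /=; do 8 (case: k => [|k] //).
Qed.

End Independence.

Theorem corollary3p3 (R : realType) : completely_integrable_geodesic_flow R.
Proof.
exists (fun k : 'I_8 => eval (first_integral k)); split; first by move=> k; exact: smooth_eval.
split; first by move=> k; exact: first_integral_gamma_invariant.
split; first by move=> k X; rewrite Ham_eval -[ham]/(first_integral 4) first_integrals_commute.
split; first by move=> k l X; exact: first_integrals_commute.
exists (@regular R); split; first exact: open_regular.
by split; [exact: dense_regular | exact: row_free_jacobian].
Qed.
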